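(* Let $G$ be a graph, $k,\ell\ge1$, $S$ an independent set of size $k$, and $J_0=S,J_1,\dots,J_\ell$ independent sets of $G$. Define $\mathcal{C}_0=\{\{(S,k)\}\}$ and, for $i\in\{1,\dots,\ell\}$, let $\mathcal{C}_i$ contain, for every $C\in\mathcal{C}_{i-1}$ and every constraint $(X,b)\in C$, the constraint set $C'$ consisting of: $(N(X)\cap J_i,1)$; $(X\cap J_i,b-1)$ if $b\ge2$ (nothing if $b=1$); and $(X'\cap J_i,b')$ for every other constraint $(X',b')\in C$. Let $i\in\{0,\dots,\ell\}$ and let $Z\subseteq J_i$ be an independent set of size $k$. If there is a sequence $S=I'_0,I'_1,\dots,I'_i=Z$ of independent sets of size $k$ such that $I'_p\subseteq J_p$ for every $p\in\{0,\dots,i\}$ and each $I'_{p+1}=(I'_p\setminus\{u\})\cup\{v\}$ for some $u\in I'_p$, $v\notin I'_p$ with $\{u,v\}\in E(G)$, then $Z$ satisfies at least one constraint set in $\mathcal{C}_i$.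
   Context: A constraint is a pair $(X,b)$ with $X\subseteq V(G)$ and $b$ a positive integer. A set $Z\subseteq V(G)$ satisfies $(X,b)$ if $|Z\cap X|=b$, and satisfies a constraint set $C$ if it satisfies every constraint in $C$. For $X\subseteq V(G)$, $N(X)=\{v\notin X: v\text{ adjacent to some }u\in X\}$. *)

From mathcomp Require Import all_boot.
Set Implicit Arguments. Unset Strict Implicit. Unset Printing Implicit Defensive.

Definition simple_graph (T : finType) (e : rel T) : Prop :=
  symmetric e /\ irreflexive e.

Definition independent (T : finType) (e : rel T) (I : {set T}) : bool :=
  [forall u in I, forall v in I, ~~ e u v].

Definition nbhd (T : finType) (e : rel T) (X : {set T}) : {set T} :=
  [set v | (v \notin X) && [exists u in X, e u v]].

(* a constraint (X, b); constraint sets are represented as lists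
   (only membership matters for satisfaction) *)
Definition constraint (T : finType) := ({set T} * nat)%type.

Definition sat_constraint (T : finType) (Z : {set T}) (c : constraint T) : bool :=
  #|Z :&: c.1| == c.2.

Definition sat_cset (T : finType) (Z : {set T}) (C : seq (constraint T)) : bool :=
  all (sat_constraint Z) C.

Definition step_cset (T : finType) (e : rel T) (J : {set T})
  (C : seq (constraint T)) (c : constraint T) : seq (constraint T) :=
  (nbhd e c.1 :&: J, 1)
  :: (if 2 <= c.2 then [:: (c.1 :&: J, c.2.-1)] else [::])
  ++ [seq (c'.1 :&: J, c'.2) | c' <- C & c' != c].

Fixpoint Cfam (T : finType) (e : rel T) (S : {set T}) (k : nat)
  (J : nat -> {set T}) (i : nat) : seq (seq (constraint T)) :=
  match i with
  | 0 => [:: [:: (S, k)]]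
  | i'.+1 => flatten [seq [seq step_cset e (J i'.+1) C c | c <- C]
                     | C <- Cfam e S k J i']
  end.

(* Along the reconfiguration sequence we maintain a constraint set C of the
   family that is pairwise disjoint, lies inside the current J_p and covers
   the current independent set I'_p.  When a token moves from u to a
   neighbour v, let (X, b) be the constraint containing u and pass to
   step_cset C (X, b).  The vertex v is adjacent to u in J_p, so it lies
   outside J_p, hence in N(X) \cap J_{p+1} and in no other constraint; every
   old constraint loses at most u, and only (X, b) loses it.  If some other
   vertex of I'_p lies in X then b >= 2, so (X \cap J_{p+1}, b - 1) is
   present to cover it.  Disjointness survives because N(X) misses J_p. *)

From mathcomp Require Import all_boot.
Set Implicit Arguments. Unset Strict Implicit. Unset Printing Implicit Defensive.

Section Independence.

Variables (T : finType) (e : rel T).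

Lemma independentP (A : {set T}) x y :
  independent e A -> x \in A -> y \in A -> ~~ e x y.
Proof.
by move=> /forall_inP indA xA yA; exact: (forall_inP (indA x xA) y yA).
Qed.

Lemma adj_notin_independent (J : {set T}) u v :
  independent e J -> u \in J -> e u v -> v \notin J.
Proof.
move=> indJ uJ euv; apply/negP=> vJ.
by have := independentP indJ uJ vJ; rewrite euv.
Qed.

Lemma nbhd_notin_independent (J X : {set T}) w :
  independent e J -> X \subset J -> w \in nbhd e X -> w \notin J.
Proof.
move=> indJ XJ; rewrite inE => /andP[_ /existsP[x /andP[xX exw]]].
exact: adj_notin_independent indJ (subsetP XJ x xX) exw.
Qed.

End Independence.

Section StepCset.

Variables (T : finType) (e : rel T).

Definition step_constraint (J : {set T}) (c0 c : constraint T) : constraint T :=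
  (c.1 :&: J, if c == c0 then c.2.-1 else c.2).

Lemma mem_step_cset J C c0 d : c0 \in C -> d \in step_cset e J C c0 ->
  d = (nbhd e c0.1 :&: J, 1) \/ exists2 c, c \in C & d = step_constraint J c0 c.
Proof.
move=> c0C; rewrite in_cons mem_cat.
case/orP=> [/eqP->|/orP[|/mapP[c]]]; first by left.
  case: (_ <= _); rewrite ?inE // => /eqP->; right.
  by exists c0; rewrite /step_constraint ?eqxx.
rewrite mem_filter => /andP[neq_c cC] ->; right; exists c => //.
by rewrite /step_constraint (negbTE neq_c).
Qed.

Lemma step_constraint_mem J C c0 c : c \in C -> (c == c0) ==> (1 < c0.2) ->
  step_constraint J c0 c \in step_cset e J C c0.
Proof.
rewrite /step_constraint in_cons mem_cat => cC.
case: eqVneq => [->|neq_c] /= b2.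
  by rewrite b2 mem_head orbT.
by rewrite orbA orbC (map_f (fun c => (c.1 :&: J, c.2))) // mem_filter neq_c.
Qed.

Lemma mem_Cfam_step S k (J : nat -> {set T}) p C c :
  C \in Cfam e S k J p -> c \in C ->
  step_cset e (J p.+1) C c \in Cfam e S k J p.+1.
Proof.
move=> CF cC; apply/flattenP; exists [seq step_cset e (J p.+1) C c' | c' <- C].
  exact: (map_f _ CF).
exact: map_f.
Qed.

End StepCset.

Section Tracking.

Variable T : finType.

Record tracks (J I : {set T}) (C : seq (constraint T)) : Prop := Tracks {
  tracks_sat : sat_cset I C;
  tracks_sub : forall c, c \in C -> c.1 \subset J;
  tracks_disjoint : forall c1 c2 w, c1 \in C -> c2 \in C ->
    w \in c1.1 -> w \in c2.1 -> c1 = c2;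
  tracks_cover : forall w, w \in I -> exists2 c, c \in C & w \in c.1 }.

Lemma tracks_base (S : {set T}) : tracks S S [:: (S, #|S|)].
Proof.
split=> [|c|c1 c2 w|w wS]; rewrite ?inE.
- by rewrite /sat_cset /= /sat_constraint setIid eqxx.
- by move=> /eqP->.
- by move=> /eqP-> /eqP->.
- by exists (S, #|S|); rewrite ?inE.
Qed.

Lemma tracks_subset J I C : tracks J I C -> I \subset J.
Proof.
move=> trC; apply/subsetP=> w /(tracks_cover trC)[c cC wc].
exact: subsetP (tracks_sub trC cC) w wc.
Qed.

Lemma tracks_card J I C c : tracks J I C -> c \in C -> #|I :&: c.1| = c.2.
Proof. by move=> /tracks_sat /allP satC /satC /eqP. Qed.

End Tracking.

Section Exchange.

Variables (T : finType) (e : rel T) (Jp Jq I : {set T}).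
Variables (C : seq (constraint T)) (u v : T) (c0 : constraint T).
Hypotheses (indJp : independent e Jp) (trC : tracks Jp I C).
Hypotheses (uI : u \in I) (euv : e u v) (exJq : I :\ u :|: [set v] \subset Jq).
Hypotheses (c0C : c0 \in C) (uc0 : u \in c0.1).

Local Notation I' := (I :\ u :|: [set v]).
Local Notation C' := (step_cset e Jq C c0).

Let IJp : I \subset Jp := tracks_subset trC.

Let v_notin_Jp : v \notin Jp.
Proof. exact: adj_notin_independent indJp (subsetP IJp u uI) euv. Qed.

Let v_notin_cset c : c \in C -> v \notin c.1.
Proof.
by move=> cC; apply: contraNN v_notin_Jp; exact: subsetP (tracks_sub trC cC) v.
Qed.

Let v_in_nbhd : v \in nbhd e c0.1 :&: Jq.
Proof.
rewrite !inE v_notin_cset //=; apply/andP; split.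
  by apply/existsP; exists u; rewrite uc0.
by apply: subsetP exJq v _; rewrite !inE eqxx orbT.
Qed.

Let nbhd_notin_Jp w : w \in nbhd e c0.1 -> w \notin Jp.
Proof. exact/nbhd_notin_independent/(tracks_sub trC c0C). Qed.

Let owner_of_u c : c \in C -> (u \in c.1) = (c == c0).
Proof.
move=> cC; apply/idP/eqP=> [uc|-> //].
exact: (tracks_disjoint trC cC c0C uc uc0).
Qed.

Lemma exchange_meet_nbhd : I' :&: (nbhd e c0.1 :&: Jq) = [set v].
Proof.
apply/setP=> w; rewrite in_set1; case: eqVneq => [->|neq_wv].
  by rewrite in_setI v_in_nbhd !inE eqxx orbT.
apply/negbTE; rewrite in_setI in_setU in_set1 in_setD1 (negbTE neq_wv) orbF.
apply/negP=> /andP[/andP[_ wI] /setIP[wN _]].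
by move: (nbhd_notin_Jp wN); rewrite (subsetP IJp w wI).
Qed.

Lemma exchange_meet_step c : c \in C -> I' :&: (c.1 :&: Jq) = (I :&: c.1) :\ u.
Proof.
move=> cC; apply/setP=> w; rewrite !inE; case: (eqVneq w v) => [->|_].
  by rewrite (negbTE (v_notin_cset cC)) !andbF.
rewrite orbF; case: (eqVneq w u) => //= neq_wu; case wI: (w \in I) => //=.
by rewrite (subsetP exJq) ?andbT // !inE neq_wu wI.
Qed.

Lemma exchange_sat : sat_cset I' C'.
Proof.
apply/allP=> d /(mem_step_cset c0C)[->|[c cC ->]]; rewrite /sat_constraint /=.
  by rewrite exchange_meet_nbhd cards1.
rewrite exchange_meet_step //.
move: (cardsD1 u (I :&: c.1)).
rewrite (tracks_card trC cC) in_setI uI owner_of_u //.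
by case: (c == c0) => ->; rewrite ?add1n.
Qed.

Lemma exchange_sub d : d \in C' -> d.1 \subset Jq.
Proof. by move=> /(mem_step_cset c0C)[->|[c _ ->]]; exact: subsetIr. Qed.

Lemma exchange_disjoint d1 d2 w : d1 \in C' -> d2 \in C' ->
  w \in d1.1 -> w \in d2.1 -> d1 = d2.
Proof.
have step_in_Jp c : c \in C -> w \in (step_constraint Jq c0 c).1 -> w \in Jp.
  by move=> cC /setIP[wc _]; exact: subsetP (tracks_sub trC cC) w wc.
move=> /(mem_step_cset c0C)[->|[c1 c1C ->]];
  move=> /(mem_step_cset c0C)[->|[c2 c2C ->]] //.
- by move=> /setIP[/nbhd_notin_Jp/negP wJp _] /(step_in_Jp _ c2C).
- by move=> /(step_in_Jp _ c1C) wJp /setIP[/nbhd_notin_Jp/negP].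
move=> /setIP[w1 _] /setIP[w2 _].
by rewrite (tracks_disjoint trC c1C c2C w1 w2).
Qed.

Lemma exchange_cover w : w \in I' -> exists2 d, d \in C' & w \in d.1.
Proof.
rewrite !inE => /orP[/andP[neq_wu wI]|/eqP->]; last first.
  by exists (nbhd e c0.1 :&: Jq, 1); rewrite ?mem_head.
have [c cC wc] := tracks_cover trC wI.
exists (step_constraint Jq c0 c); last first.
  by rewrite inE wc (subsetP exJq) // !inE neq_wu wI.
apply: step_constraint_mem => //; apply/implyP=> /eqP eq_c; subst c.
have uw_sub : [set u; w] \subset I :&: c0.1.
  by apply/subsetP=> x; rewrite !inE => /orP[] /eqP->; rewrite ?uI ?uc0 ?wI ?wc.
rewrite -(tracks_card trC c0C); apply: leq_trans (subset_leq_card uw_sub).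
by rewrite cards2 eq_sym neq_wu.
Qed.

Lemma tracks_step : tracks Jq I' C'.
Proof.
split; [exact: exchange_sat | exact: exchange_sub |
       exact: exchange_disjoint | exact: exchange_cover].
Qed.

End Exchange.

Lemma tracks_exchange (T : finType) (e : rel T) (Jp Jq I : {set T}) C u v :
  independent e Jp -> tracks Jp I C -> u \in I -> e u v ->
  I :\ u :|: [set v] \subset Jq ->
  exists2 c, c \in C & tracks Jq (I :\ u :|: [set v]) (step_cset e Jq C c).
Proof.
move=> indJp trC uI euv exJq; have [c0 c0C uc0] := tracks_cover trC uI.
by exists c0; last exact: tracks_step indJp trC uI euv exJq c0C uc0.
Qed.

Theorem lemma3p6 (T : finType) (e : rel T) (k l : nat) (S : {set T})
  (J : nat -> {set T}) (i : nat) (Z : {set T}) (I' : nat -> {set T}) :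
  simple_graph e ->
  1 <= k -> 1 <= l ->
  independent e S -> #|S| = k ->
  J 0 = S ->
  (forall p, p <= l -> independent e (J p)) ->
  i <= l ->
  Z \subset J i -> independent e Z -> #|Z| = k ->
  I' 0 = S -> I' i = Z ->
  (forall p, p <= i -> [/\ independent e (I' p), #|I' p| = k & I' p \subset J p]) ->
  (forall p, p < i -> exists u v, [/\ u \in I' p, v \notin I' p, e u v &
                                  I' p.+1 = (I' p :\ u) :|: [set v]]) ->
  exists2 C, C \in Cfam e S k J i & sat_cset Z C.
Proof.
move=> _ _ _ _ cardS J0 indJ le_il _ _ _ I0 Ii I'_in_J exchange.
have tracks_path p :
    p <= i -> exists2 C, C \in Cfam e S k J p & tracks (J p) (I' p) C.
  elim: p => [_|p IH lt_pi].
    by exists [:: (S, k)]; rewrite ?inE // J0 I0 -cardS; exact: tracks_base.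
  have [C CF trC] := IH (ltnW lt_pi).
  have [_ _ subJ] := I'_in_J p.+1 lt_pi.
  have [u [v [uI _ euv eqI']]] := exchange p lt_pi; rewrite eqI' in subJ *.
  have indJp := indJ p (leq_trans (ltnW lt_pi) le_il).
  have [c cC trC'] := tracks_exchange indJp trC uI euv subJ.
  by exists (step_cset e (J p.+1) C c) => //; exact: mem_Cfam_step.
have [C CF trC] := tracks_path i (leqnn i).
by exists C; rewrite // -Ii; exact: tracks_sat trC.
Qed.
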